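(* Let $k\ge 3$ be an integer and $F$ a field admitting a primitive $(k-1)$-th root of unity with $\mathrm{char}(F)\nmid k$. Let $X$ be a finite poset, $B$ a unital associative $F$-algebra, and $\varphi:I(X,F)\to B$ an $F$-linear map with $\varphi(P_k(I(X,F)))\subseteq P_k(B)$ and $1\in\varphi(I(X,F))$. Then there exist a Jordan homomorphism $\psi:I(X,F)\to B$ and an element $u\in B$ commuting with every element of $\varphi(I(X,F))$, with $u^{k-1}=1$, such that $\varphi=u\psi$.
   Context: $I(X,F)$ is the incidence algebra of the locally finite poset $X$ over $F$ (functions $f:X\times X\to F$ vanishing unless $x\le y$, with product $(fg)(x,y)=\sum_{x\le z\le y}f(x,z)g(z,y)$). $P_k(A)=\{a: a^k=a\}$. A Jordan homomorphism $\psi:A\to B$ of associative algebras is a linear map with $\psi(a^2)=\psi(a)^2$ and $\psi(aba)=\psi(a)\psi(b)\psi(a)$ for all $a,b$. *)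

From HB Require Import structures.
From mathcomp Require Import all_boot all_order all_algebra.
Set Implicit Arguments.
Unset Strict Implicit.
Unset Printing Implicit Defensive.
Import Order.TTheory GRing.Theory Num.Theory.
Local Open Scope ring_scope.

(* Incidence algebra I(X,F) of a finite poset X over a field F.
   Elements are represented as functions f : X * X -> F (finite functions)
   satisfying the support condition [is_incidence f]. *)
Section Incidence.
Variables (d : Order.disp_t) (X : finPOrderType d) (F : fieldType).

Local Notation incfun := {ffun X * X -> F}.

Definition is_incidence (f : incfun) : Prop :=
  forall x y : X, ~~ (x <= y)%O -> f (x, y) = 0.

Definition inc_mul (f g : incfun) : incfun :=
  [ffun p => \sum_(z : X | (p.1 <= z)%O && (z <= p.2)%O) f (p.1, z) * g (z, p.2)].

Definition inc_one : incfun := [ffun p => (p.1 == p.2)%:R].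

Definition inc_comb (c : F) (f g : incfun) : incfun := [ffun p => c * f p + g p].

Definition inc_exp (f : incfun) (n : nat) : incfun := iter n (inc_mul f) inc_one.

End Incidence.

Notation incfun X F := {ffun (X : finPOrderType _) * X -> (F : fieldType)}.

Definition inc_linear d (X : finPOrderType d) (F : fieldType) (B : algType F)
  (phi : incfun X F -> B) : Prop :=
  forall (c : F) (f g : incfun X F), is_incidence f -> is_incidence g ->
    phi (inc_comb c f g) = c *: phi f + phi g.

Definition inc_jordan_hom d (X : finPOrderType d) (F : fieldType) (B : algType F)
  (psi : incfun X F -> B) : Prop :=
  [/\ inc_linear psi,
      (forall a, is_incidence a -> psi (inc_mul a a) = psi a * psi a) &
      (forall a b, is_incidence a -> is_incidence b ->
         psi (inc_mul (inc_mul a b) a) = psi a * psi b * psi a)].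

From HB Require Import structures.
From mathcomp Require Import all_boot all_order all_algebra.
From mathcomp Require Import zify.
Import Order.TTheory GRing.Theory Num.Theory.
Local Open Scope ring_scope.
Set Implicit Arguments.
Unset Strict Implicit.
Unset Printing Implicit Defensive.

(* Write k = m + 1 and u = phi 1.  For an idempotent e of I(X,F) and an m-th
   root of unity z, e + z (1 - e) is k-potent, so a = phi e and b = phi (1 - e)
   satisfy (a + z b)^k = a + z b.  Averaging over z isolates the part of
   (a + mu b)^k that is linear in mu, i.e. the derivative sum_j a^j b a^(m-j)
   of x^k at a; it vanishes, and together with a^k = a this forces
   ab = ba = 0.  Hence u = a + b commutes with phi e and u^m phi e = phi e.
   As I(X,F) is spanned by idempotents (e_xx and e_xx + e_xy), the same holds
   on all of phi(I(X,F)); so u^m = 1, and psi = u^(m-1) phi satisfies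
   phi = u psi and maps idempotents to idempotents.  As m and m + 1 are
   invertible in F, so is 2, and a linear map sending e + x and e - x to
   idempotents (e idempotent, x^2 = 0, ex + xe = x), as well as sums of
   orthogonal idempotents, preserves the Jordan product of matrix units;
   bilinearity extends this to I(X,F), and
   2aba = a(ab + ba) + (ab + ba)a - (a^2 b + b a^2) gives the triple product. *)

(** * Roots of unity and k-potent pencils *)

Lemma sum_prim_root_expM (F : fieldType) (w : F) m s :
    m.-primitive_root w ->
  \sum_(i < m) w ^+ (s * i) = if (m %| s)%N then m%:R else 0.
Proof.
move=> prim_w; under eq_bigr => i _ do rewrite exprM.
rewrite (prim_order_dvd prim_w); case: eqP => [-> | /eqP ws_neq1].
  by rewrite (eq_bigr (fun=> 1)) ?sumr_const ?card_ord // => i _; rewrite expr1n.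
have : (w ^+ s) ^+ m - 1 = 0.
  by rewrite -exprM mulnC exprM (prim_expr_order prim_w) expr1n subrr.
by rewrite subrX1 => /eqP; rewrite mulf_eq0 subr_eq0 (negbTE ws_neq1) => /eqP.
Qed.

Lemma prim_root_filter (F : fieldType) (V : lmodType F) (w : F) m s n
    (c : nat -> V) : m.-primitive_root w ->
  \sum_(i < m) w ^+ (s * i) *: \sum_(r < n) (w ^+ i) ^+ r *: c r =
  m%:R *: \sum_(r < n | (m %| s + r)%N) c r.
Proof.
move=> prim_w; under eq_bigr => i _ do rewrite scaler_sumr.
rewrite exchange_big scaler_sumr [RHS]big_mkcond; apply: eq_bigr => r _.
under eq_bigr => i _ do rewrite scalerA -exprM -exprD mulnC -mulnDr mulnC.
by rewrite -scaler_suml sum_prim_root_expM //; case: ifP; rewrite ?scale0r.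
Qed.

Lemma dvdn_pred_add m r : (1 < m)%N -> (r < m.+2)%N ->
  (m %| m.-1 + r)%N = (r == 1%N) || (r == m.+1).
Proof.
move=> m_gt1; case: r => [|[|r]] r_lt.
- by rewrite addn0 gtnNdvd //; lia.
- by rewrite addn1 prednK ?dvdnn //; lia.
have -> : (m.-1 + r.+2 = r.+1 + m)%N by lia.
rewrite dvdn_addl //= !eqSS; case: (ltngtP r.+1 m) => [lt_rm | gt_rm | ->].
- by rewrite gtnNdvd.
- by exfalso; lia.
- exact: dvdnn.
Qed.

Section Pencil.
Variables (F : fieldType) (A : algType F).
Implicit Types a b : A.

(* [word_sum a b n r] is the sum of the words of length [n] with [r] letters [b]
   and [n - r] letters [a]: the coefficient of [mu ^+ r] in [(a + mu *: b) ^+ n]. *)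
Fixpoint word_sum a b n r : A :=
  if n is n'.+1 then
    a * word_sum a b n' r + (if r is r'.+1 then b * word_sum a b n' r' else 0)
  else (r == 0)%:R.

Lemma word_sumS0 a b n : word_sum a b n.+1 0 = a * word_sum a b n 0.
Proof. by rewrite /= addr0. Qed.

Lemma word_sumSS a b n r :
  word_sum a b n.+1 r.+1 = a * word_sum a b n r.+1 + b * word_sum a b n r.
Proof. by []. Qed.

Lemma word_sum_eq0 a b n r : (n < r)%N -> word_sum a b n r = 0.
Proof.
elim: n r => [|n IHn] [|r] // ltnr.
by rewrite word_sumSS !IHn ?mulr0 ?addr0 // (ltn_trans _ ltnr).
Qed.

Lemma word_sum0 a b n : word_sum a b n 0 = a ^+ n.
Proof. by elim: n => [|n IHn]; rewrite ?expr0 // word_sumS0 IHn exprS. Qed.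

Lemma word_sum_diag a b n : word_sum a b n n = b ^+ n.
Proof.
by elim: n => [|n IHn]; rewrite ?expr0 // word_sumSS word_sum_eq0 // mulr0 add0r IHn exprS.
Qed.

Lemma word_sum1 a b n :
  word_sum a b n.+1 1%N = \sum_(j < n.+1) a ^+ j * b * a ^+ (n - j).
Proof.
elim: n => [|n IHn].
  by rewrite word_sumSS word_sum_eq0 // big_ord1 mulr0 add0r !expr0 mul1r !mulr1.
rewrite word_sumSS IHn word_sum0 mulr_sumr [RHS]big_ord_recl expr0 mul1r subn0 addrC.
by congr (_ + _); apply: eq_bigr => j _; rewrite /bump /= exprS subSS !mulrA.
Qed.

Lemma expr_pencil a b (mu : F) n :
  (a + mu *: b) ^+ n = \sum_(r < n.+1) mu ^+ r *: word_sum a b n r.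
Proof.
elim: n => [|n IHn]; first by rewrite expr0 big_ord1 /= expr0 scale1r.
rewrite exprS IHn mulrDl !mulr_sumr [RHS]big_ord_recl word_sumS0 expr0 scale1r.
under [in RHS]eq_bigr => r _ do rewrite lift0 word_sumSS scalerDr.
rewrite big_split /= addrA; congr (_ + _).
  rewrite big_ord_recl big_ord_recr /= (word_sum_eq0 a b (ltnSn n)) mulr0 scaler0.
  rewrite expr0 scale1r addr0; congr (_ + _); apply: eq_bigr => r _.
  by rewrite scalerAr.
by apply: eq_bigr => r _; rewrite exprS -scalerA -scalerAl -scalerAr.
Qed.

Lemma word_sum1_commutator a b n :
  a * word_sum a b n.+1 1%N - word_sum a b n.+1 1%N * a = a ^+ n.+1 * b - b * a ^+ n.+1.
Proof.
pose g j := a ^+ j * b * a ^+ (n.+1 - j).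
have -> : a * word_sum a b n.+1 1%N = \sum_(0 <= j < n.+1) g j.+1.
  by rewrite word_sum1 big_mkord mulr_sumr; apply: eq_bigr => j _; rewrite !mulrA -exprS.
have -> : word_sum a b n.+1 1%N * a = \sum_(0 <= j < n.+1) g j.
  rewrite word_sum1 big_mkord mulr_suml; apply: eq_bigr => j _.
  by rewrite /g -mulrA -exprSr subSn // -ltnS.
by rewrite -sumrB telescope_sumr // /g subnn subn0 !expr0 mulr1 mul1r.
Qed.

(* [word_sum a b m.+1 1] is the derivative of [x ^+ m.+1] at [a] in the direction [b]. *)
Lemma kpotent_word_sum1_eq0 m a b : (m.+1)%:R != 0 :> F ->
  a ^+ m.+1 = a -> word_sum a b m.+1 1%N = 0 -> a * b = 0 /\ b * a = 0.
Proof.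
move=> m1_neq0 kpot_a ws0.
have ab_comm : a * b = b * a.
  have := word_sum1_commutator a b m.
  by rewrite ws0 mulr0 mul0r subrr kpot_a => /eqP; rewrite eq_sym subr_eq0 => /eqP.
have : (a ^+ m * b) *+ m.+1 = 0.
  rewrite -ws0 word_sum1 (eq_bigr (fun=> a ^+ m * b)) ?sumr_const ?card_ord // => j _.
  by rewrite -mulrA (commrX _ (esym ab_comm)) mulrA -exprD subnKC // -ltnS.
rewrite -scaler_nat => /eqP; rewrite scaler_eq0 (negbTE m1_neq0) /= => /eqP am_b0.
have ab0 : a * b = 0 by rewrite -kpot_a exprS -mulrA am_b0 mulr0.
by split; rewrite // -ab_comm.
Qed.

Lemma prim_root_pencil_orth m (w : F) a b : (1 < m)%N -> m.-primitive_root w ->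
    (m.+1)%:R != 0 :> F -> a ^+ m.+1 = a -> b ^+ m.+1 = b ->
    (forall i, (a + w ^+ i *: b) ^+ m.+1 = a + w ^+ i *: b) ->
  a * b = 0 /\ b * a = 0.
Proof.
move=> m_gt1 prim_w m1_neq0 kpot_a kpot_b kpot_pencil.
apply: (@kpotent_word_sum1_eq0 m) => //.
pose c r := if r is 0 then a else b.
have pencilE i : a + w ^+ i *: b = \sum_(r < 2) (w ^+ i) ^+ r *: c r.
  by rewrite big_ord_recr big_ord1 /= expr0 scale1r expr1.
have := prim_root_filter m.-1 m.+2 (word_sum a b m.+1) prim_w.
under eq_bigr => i _ do rewrite -expr_pencil kpot_pencil pencilE.
rewrite prim_root_filter // => /(scalerI (prim_root_natf_neq0 prim_w)).
set W := word_sum a b m.+1.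
(* The weights [w ^+ (m.-1 * i)] keep exactly the coefficients of [mu] and
   [mu ^+ m.+1] in [(a + mu *: b) ^+ m.+1], and the coefficient of [mu] in
   [a + mu *: b]. *)
have -> : \sum_(r < 2 | (m %| m.-1 + r)%N) c r = b.
  by rewrite big_mkcond big_ord_recr big_ord1 /= !dvdn_pred_add //= add0r.
have filteredE : \sum_(r < m.+2 | (m %| m.-1 + r)%N) W r = W 1%N + W m.+1.
  rewrite (bigD1 (Ordinal (isT : 1 < m.+2)%N)) ?dvdn_pred_add //=.
  rewrite (bigD1 ord_max) ?dvdn_pred_add ?eqxx ?orbT //=; last first.
    by rewrite -val_eqE /= eqSS; apply/eqP; lia.
  rewrite big_pred0 ?addr0 // => r.
  by rewrite dvdn_pred_add // -!val_eqE /=; case: eqP; case: eqP.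
by rewrite filteredE /W word_sum_diag kpot_b -{1}[b]add0r => /addIr.
Qed.

End Pencil.

(** * Idempotents and Jordan products in rings *)

Lemma idem_exprS (R : pzSemiRingType) (e : R) n : e * e = e -> e ^+ n.+1 = e.
Proof. by move=> idem_e; elim: n => [|n IHn]; rewrite ?expr1 // exprS IHn. Qed.

Lemma idem_add_sub (R : pzRingType) (a b : R) : a * a = a ->
    (a + b) * (a + b) = a + b -> (a - b) * (a - b) = a - b ->
  (a * b + b * a) *+ 2 = b *+ 2 /\ (b * b) *+ 2 = 0.
Proof.
move=> idem_a idem_add idem_sub.
have plus : (a * b + b * a) + b * b = b.
  by move: idem_add; rewrite mulrDl !mulrDr idem_a -!addrA => /addrI; rewrite addrA.
have minus : - (a * b + b * a) + b * b = - b.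
  move: idem_sub; rewrite mulrDl !mulrDr !mulrN !mulNr opprK idem_a -!addrA => /addrI.
  by rewrite opprD addrA.
set J := a * b + b * a in plus minus *; set Q := b * b in plus minus *.
split.
  have -> : J *+ 2 = (J + Q) - (- J + Q) by rewrite opprD opprK addrACA subrr addr0 mulr2n.
  by rewrite plus minus opprK mulr2n.
have -> : Q *+ 2 = (J + Q) + (- J + Q) by rewrite addrACA subrr add0r mulr2n.
by rewrite plus minus subrr.
Qed.

Lemma idem_add_anticomm (R : pzRingType) (a b : R) : a * a = a -> b * b = b ->
  (a + b) * (a + b) = a + b -> a * b + b * a = 0.
Proof.
move=> idem_a idem_b; rewrite mulrDl !mulrDr idem_a idem_b (addrC (b * a)) addrACA.
by rewrite -[X in _ = X]addr0 => /addrI.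
Qed.

Lemma jordan_triple_identity (R : pzRingType) (a b : R) :
  a * (a * b + b * a) + (a * b + b * a) * a - (a * a * b + b * (a * a)) =
  (a * b * a) *+ 2.
Proof.
rewrite mulrDr mulrDl !mulrA [a * b * a + _]addrC addrACA mulr2n.
by rewrite [X in X - _]addrC addrK.
Qed.

(** * Matrices indexed by a finite poset *)

Section XMatrix.
Variables (d : Order.disp_t) (X : finPOrderType d) (F : fieldType).

(* The full matrix algebra containing I(X,F) as the subalgebra [is_incidence];
   an alias, since [{ffun X * X -> F}] already carries the pointwise product. *)
Definition xmatrix := {ffun X * X -> F}.
HB.instance Definition _ := GRing.Zmodule.on xmatrix.

Implicit Types f g h : xmatrix.

Definition xscale (c : F) f : xmatrix := [ffun p => c * f p].

Lemma xscaleA a b f : xscale a (xscale b f) = xscale (a * b) f.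
Proof. by apply/ffunP => p; rewrite !ffunE mulrA. Qed.
Lemma xscale1 : left_id 1 xscale.
Proof. by move=> f; apply/ffunP => p; rewrite ffunE mul1r. Qed.
Lemma xscaleDr : right_distributive xscale +%R.
Proof. by move=> c f g; apply/ffunP => p; rewrite !ffunE mulrDr. Qed.
Lemma xscaleDl f : {morph xscale^~ f : a b / a + b}.
Proof. by move=> a b; apply/ffunP => p; rewrite !ffunE mulrDl. Qed.

HB.instance Definition _ :=
  GRing.Zmodule_isLmodule.Build F xmatrix xscaleA xscale1 xscaleDr xscaleDl.

Lemma xscaleE c f p : (c *: f) p = c * f p.
Proof. exact: ffunE. Qed.

Definition xmul f g : xmatrix := [ffun p => \sum_z f (p.1, z) * g (z, p.2)].

Lemma xmulA : associative xmul.
Proof.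
move=> f g h; apply/ffunP => p; rewrite !ffunE.
under [RHS]eq_bigr => z _ do rewrite ffunE mulr_suml.
rewrite exchange_big; apply: eq_bigr => y _; rewrite ffunE mulr_sumr.
by apply: eq_bigr => z _; rewrite mulrA.
Qed.

Lemma xmul1l : left_id (inc_one X F) xmul.
Proof.
move=> f; apply/ffunP => p; rewrite ffunE (bigD1 p.1) //= big1 ?addr0.
  by rewrite ffunE eqxx mul1r -surjective_pairing.
by move=> z /negbTE z_neq; rewrite ffunE /= eq_sym z_neq mul0r.
Qed.

Lemma xmul1r : right_id (inc_one X F) xmul.
Proof.
move=> f; apply/ffunP => p; rewrite ffunE (bigD1 p.2) //= big1 ?addr0.
  by rewrite ffunE eqxx mulr1 -surjective_pairing.
by move=> z /negbTE z_neq; rewrite ffunE /= z_neq mulr0.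
Qed.

Lemma xmulDl : left_distributive xmul +%R.
Proof.
move=> f g h; apply/ffunP => p; rewrite !ffunE -big_split.
by apply: eq_bigr => z _; rewrite ffunE mulrDl.
Qed.

Lemma xmulDr : right_distributive xmul +%R.
Proof.
move=> f g h; apply/ffunP => p; rewrite !ffunE -big_split.
by apply: eq_bigr => z _; rewrite ffunE mulrDr.
Qed.

HB.instance Definition _ :=
  GRing.Zmodule_isPzRing.Build xmatrix xmulA xmul1l xmul1r xmulDl xmulDr.

Lemma xzeroE p : (0 : xmatrix) p = 0.
Proof. exact: ffunE. Qed.

Lemma xmulE f g p : (f * g) p = \sum_z f (p.1, z) * g (z, p.2).
Proof. exact: ffunE. Qed.

Lemma xscaleAl c f g : c *: (f * g) = (c *: f) * g.
Proof.
apply/ffunP => p; rewrite xscaleE !xmulE mulr_sumr.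
by apply: eq_bigr => z _; rewrite xscaleE mulrA.
Qed.

Lemma xscaleAr c f g : c *: (f * g) = f * (c *: g).
Proof.
apply/ffunP => p; rewrite xscaleE !xmulE mulr_sumr.
by apply: eq_bigr => z _; rewrite xscaleE mulrCA.
Qed.

Lemma idem_pencil_expr (e : xmatrix) (mu : F) n : e * e = e ->
  (e + mu *: (1 - e)) ^+ n = e + mu ^+ n *: (1 - e).
Proof.
move=> idem_e; have e_1e : e * (1 - e) = 0 by rewrite mulrBr mulr1 idem_e subrr.
have e1_e : (1 - e) * e = 0 by rewrite mulrBl mul1r idem_e subrr.
have idem_1e : (1 - e) * (1 - e) = 1 - e by rewrite mulrBr e1_e subr0 mulr1.
elim: n => [|n IHn]; first by rewrite !expr0 scale1r addrC subrK.
rewrite exprS IHn mulrDl !mulrDr idem_e -!xscaleAr -!xscaleAl e_1e e1_e idem_1e.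
by rewrite !scaler0 addr0 add0r scalerA mulrC exprS.
Qed.

Definition delta x y : xmatrix := [ffun p => ((p.1 == x) && (p.2 == y))%:R].

Lemma deltaE x y p : delta x y p = ((p.1 == x) && (p.2 == y))%:R.
Proof. exact: ffunE. Qed.

Lemma delta_mul x y z v : delta x y * delta z v = if y == z then delta x v else 0.
Proof.
apply/ffunP => p; rewrite xmulE (bigD1 y) //= big1 => [|w /negbTE w_neq]; last first.
  by rewrite !deltaE w_neq andbF mul0r.
rewrite !deltaE eqxx andbT addr0; case: (eqVneq y z) => _; last by rewrite xzeroE mulr0.
by rewrite deltaE /=; case: (p.1 == x); rewrite ?mul0r ?mul1r.
Qed.

Lemma delta_idem x : delta x x * delta x x = delta x x.
Proof. by rewrite delta_mul eqxx. Qed.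

Local Notation inc := (@is_incidence d X F).

Lemma inc0 : inc 0.
Proof. by move=> x y _; rewrite xzeroE. Qed.
Lemma incD f g : inc f -> inc g -> inc (f + g).
Proof. by move=> inc_f inc_g x y xy; rewrite ffunE inc_f // inc_g // addr0. Qed.
Lemma incN f : inc f -> inc (- f).
Proof. by move=> inc_f x y xy; rewrite ffunE inc_f // oppr0. Qed.
Lemma incB f g : inc f -> inc g -> inc (f - g).
Proof. by move=> inc_f inc_g; apply/incD/incN. Qed.
Lemma incZ c f : inc f -> inc (c *: f).
Proof. by move=> inc_f x y xy; rewrite xscaleE inc_f // mulr0. Qed.
Lemma inc1 : inc (1 : xmatrix).
Proof. by move=> x y; rewrite ffunE /=; case: eqP => // ->; rewrite lexx. Qed.
Lemma inc_delta x y : (x <= y)%O -> inc (delta x y).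
Proof.
move=> le_xy a b ab; rewrite deltaE /=.
by case: eqP => [ax|] //; case: eqP => [b_y|] //; rewrite ax b_y le_xy in ab.
Qed.
Lemma incM f g : inc f -> inc g -> inc (f * g).
Proof.
move=> inc_f inc_g x y xy; rewrite xmulE big1 // => z _ /=.
case xz: (x <= z)%O; last by rewrite inc_f ?xz // mul0r.
by rewrite inc_g ?mulr0 //; apply: contra xy; apply: le_trans.
Qed.

Lemma incX f n : inc f -> inc (f ^+ n).
Proof. by move=> inc_f; elim: n => [|n IHn]; [exact: inc1 | rewrite exprS; exact: incM]. Qed.

Lemma inc_mulE f g : inc f -> inc g -> inc_mul f g = f * g.
Proof.
move=> inc_f inc_g; apply/ffunP => p; rewrite ffunE xmulE big_mkcond /=.
apply: eq_bigr => z _; case: ifP => // /negbT; rewrite negb_and => /orP[] lt_z.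
  by rewrite inc_f // mul0r.
by rewrite inc_g // mulr0.
Qed.

Lemma inc_expE f n : inc f -> inc_exp f n = f ^+ n.
Proof. by move=> inc_f; elim: n => //= n IHn; rewrite exprS IHn inc_mulE //; apply: incX. Qed.

Lemma inc_combE c f g : inc_comb c f g = c *: f + g.
Proof. by apply/ffunP => p; rewrite !ffunE. Qed.

Lemma inc_delta_sum f : inc f -> f = \sum_(p | (p.1 <= p.2)%O) f p *: delta p.1 p.2.
Proof.
move=> inc_f; apply/ffunP => q; rewrite sum_ffunE.
have deltaEq p : delta p.1 p.2 q = (q == p)%:R.
  by rewrite deltaE; case: p q => [x y] [a b]; rewrite xpair_eqE.
under eq_bigr => p _ do rewrite xscaleE deltaEq.
case: (boolP (q.1 <= q.2)%O) => [le_q | nle_q].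
  rewrite (bigD1 q) //= big1 => [|p /andP[_ /negbTE neq_pq]]; first by rewrite eqxx mulr1 addr0.
  by rewrite eq_sym neq_pq mulr0.
have -> : f q = 0 by case: q nle_q {deltaEq} => x y; exact: inc_f.
rewrite big1 // => p le_p.
by rewrite (_ : q == p = false) ?mulr0 //; apply: contraNF nle_q => /eqP ->.
Qed.

End XMatrix.

(** * Linear maps preserving k-potents *)

Section KpotentPreserver.
Variables (d : Order.disp_t) (X : finPOrderType d) (F : fieldType) (B : algType F).
Variable phi : xmatrix X F -> B.
Hypothesis phi_lin : inc_linear phi.

Local Notation inc := (@is_incidence d X F).
Local Notation delta := (delta F).
Implicit Types (f g e : xmatrix X F) (x y z v : X).

Lemma phi0 : phi 0 = 0.
Proof.
have := phi_lin 1 (inc0 F) (inc0 F); rewrite inc_combE !scale1r addr0 => /esym/eqP.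
by rewrite -subr_eq0 addrK => /eqP.
Qed.

Lemma phiD f g : inc f -> inc g -> phi (f + g) = phi f + phi g.
Proof. by move=> inc_f inc_g; have := phi_lin 1 inc_f inc_g; rewrite inc_combE !scale1r. Qed.

Lemma phiZ c f : inc f -> phi (c *: f) = c *: phi f.
Proof. by move=> inc_f; rewrite -[c *: f]addr0 -inc_combE phi_lin ?phi0 ?addr0 //; apply: inc0. Qed.

Lemma phi_sum (I : finType) (P : pred I) (c : I -> F) (g : I -> xmatrix X F) :
    (forall i, P i -> inc (g i)) ->
  phi (\sum_(i | P i) c i *: g i) = \sum_(i | P i) c i *: phi (g i).
Proof.
move=> inc_g; pose Q f b := inc f /\ phi f = b.
suff [] : Q (\sum_(i | P i) c i *: g i) (\sum_(i | P i) c i *: phi (g i)) by [].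
apply: (big_rec2 Q); first by split; [apply: inc0 | apply: phi0].
move=> i f b P_i [inc_f <-]; have inc_cg := incZ (c i) (inc_g i P_i).
by split; [apply: incD | rewrite phiD ?phiZ //; apply: inc_g].
Qed.

(* The extension of [phi] to all of [xmatrix] vanishing off the order relation;
   unlike [phi] it is linear without side conditions. *)
Definition phix f : B := \sum_(p | (p.1 <= p.2)%O) f p *: phi (delta p.1 p.2).

Lemma phix_is_linear : linear phix.
Proof.
move=> c f g; rewrite /phix scaler_sumr -big_split; apply: eq_bigr => p _.
by rewrite ffunE xscaleE scalerDl scalerA.
Qed.

HB.instance Definition _ := GRing.isLinear.Build F (xmatrix X F) B *:%R phix phix_is_linear.

Lemma phixE f : inc f -> phix f = phi f.
Proof.
by move=> inc_f; rewrite [in RHS](inc_delta_sum inc_f) phi_sum // => p; apply: inc_delta.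
Qed.

Variables (m : nat) (w : F).
Hypotheses (m_gt1 : (1 < m)%N) (prim_w : m.-primitive_root w).
Hypothesis m1_neq0 : (m.+1)%:R != 0 :> F.
Hypothesis phi_kpot : forall f, inc f -> inc_exp f m.+1 = f -> phi f ^+ m.+1 = phi f.

Local Notation u := (phi 1).

Lemma phi_kpotent f : inc f -> f ^+ m.+1 = f -> phi f ^+ m.+1 = phi f.
Proof. by move=> inc_f; rewrite -inc_expE //; apply: phi_kpot. Qed.

(* The k-potents e + w^i (1 - e) force phi e and phi (1 - e) to be orthogonal. *)
Lemma phi_idem_orth e : inc e -> e * e = e ->
  phi e * phi (1 - e) = 0 /\ phi (1 - e) * phi e = 0.
Proof.
move=> inc_e idem_e; have inc_1e : inc (1 - e) by apply: incB => //; apply: inc1.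
have idem_1e : (1 - e) * (1 - e) = 1 - e.
  by rewrite mulrBr mulr1 mulrBl mul1r idem_e subrr subr0.
apply: (prim_root_pencil_orth m_gt1 prim_w m1_neq0); try exact/phi_kpotent/idem_exprS.
move=> i; rewrite -phiZ // -phiD //; last exact: incZ.
apply: phi_kpotent; first by apply: incD => //; apply: incZ.
rewrite idem_pencil_expr // -exprM mulnSr exprD mulnC exprM.
by rewrite (prim_expr_order prim_w) expr1n mul1r.
Qed.

Lemma phi_idem_mul_u e : inc e -> e * e = e ->
  phi e * u = phi e ^+ 2 /\ u * phi e = phi e ^+ 2.
Proof.
move=> inc_e idem_e; have [orth_l orth_r] := phi_idem_orth inc_e idem_e.
have -> : u = phi e + phi (1 - e).
  by rewrite -phiD ?[e + _]addrC ?subrK //; apply: incB => //; apply: inc1.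
by rewrite mulrDr mulrDl orth_l orth_r !addr0 expr2.
Qed.

Lemma expu_mul_phi_idem e j : inc e -> e * e = e -> u ^+ j * phi e = phi e ^+ j.+1.
Proof.
move=> inc_e idem_e; have [_ u_mul] := phi_idem_mul_u inc_e idem_e.
elim: j => [|j IHj]; first by rewrite expr0 mul1r expr1.
by rewrite exprSr -mulrA u_mul expr2 mulrA IHj -exprSr.
Qed.

Definition u_compat (b : B) := u * b = b * u /\ u ^+ m * b = b.

Lemma u_compat_phi_idem e : inc e -> e * e = e -> u_compat (phi e).
Proof.
move=> inc_e idem_e; have [mul_u u_mul] := phi_idem_mul_u inc_e idem_e.
split; first by rewrite mul_u.
by rewrite expu_mul_phi_idem // (phi_kpotent inc_e (idem_exprS _ idem_e)).
Qed.

Lemma u_compatD a b : u_compat a -> u_compat b -> u_compat (a + b).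
Proof. by move=> [ua ma] [ub mb]; split; rewrite ?mulrDr ?mulrDl ?ua ?ub ?ma ?mb. Qed.

Lemma u_compatZ c b : u_compat b -> u_compat (c *: b).
Proof. by move=> [ub mb]; split; rewrite -?scalerAr -?scalerAl ?ub ?mb. Qed.

Lemma u_compat_phi_delta x y : (x <= y)%O -> u_compat (phi (delta x y)).
Proof.
move=> le_xy; have inc_xx := inc_delta F (lexx x); have inc_xy := inc_delta F le_xy.
have [<- | neq_xy] := eqVneq x y; first exact/u_compat_phi_idem/delta_idem.
have -> : phi (delta x y) = phi (delta x x + delta x y) + (-1) *: phi (delta x x).
  by rewrite phiD // scaleN1r addrAC subrr add0r.
apply: u_compatD; last exact/u_compatZ/u_compat_phi_idem/delta_idem.
apply: u_compat_phi_idem; first exact: incD.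
by rewrite mulrDl !mulrDr !delta_mul eqxx eq_sym (negbTE neq_xy) !addr0.
Qed.

Lemma u_compat_phix f : u_compat (phix f).
Proof.
apply: (big_ind u_compat); first by split; rewrite ?mulr0 ?mul0r.
  exact: u_compatD.
by move=> p le_p; apply/u_compatZ/u_compat_phi_delta.
Qed.

Lemma phi_comm_u f : inc f -> u * phi f = phi f * u.
Proof. by move=> inc_f; rewrite -(phixE inc_f); case: (u_compat_phix f). Qed.

Hypothesis phi_hits1 : exists2 f, inc f & phi f = 1.

Lemma expu_m : u ^+ m = 1.
Proof.
have [f inc_f phi_f1] := phi_hits1; have [_] := u_compat_phix f.
by rewrite phixE // phi_f1 !mulr1.
Qed.

Definition psi f : B := u ^+ m.-1 * phix f.

Lemma psi_is_linear : linear psi.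
Proof. by move=> c f g; rewrite /psi linearP mulrDr scalerAr. Qed.

HB.instance Definition _ := GRing.isLinear.Build F (xmatrix X F) B *:%R psi psi_is_linear.

Lemma phi_u_psi f : inc f -> phi f = u * psi f.
Proof.
have m_gt0 : (0 < m)%N by apply: ltnW.
move=> inc_f; rewrite /psi mulrA -exprS prednK // -phixE //.
by have [_ ->] := u_compat_phix f.
Qed.

(* Unlike the generic [linear*] lemmas, these leave [psi] itself (not the
   coercion of its linear structure) as head symbol, for later rewrites. *)
Lemma psiD f g : psi (f + g) = psi f + psi g. Proof. exact: linearD. Qed.
Lemma psiB f g : psi (f - g) = psi f - psi g. Proof. exact: linearB. Qed.
Lemma psiMn f n : psi (f *+ n) = psi f *+ n. Proof. exact: linearMn. Qed.

Lemma psi_idem e : inc e -> e * e = e -> psi e * psi e = psi e.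
Proof.
move=> inc_e idem_e; have m_gt0 : (0 < m)%N by apply: ltnW.
rewrite /psi phixE // expu_mul_phi_idem // prednK // -exprD.
have -> : (m + m = m.-1 + m.+1)%N by lia.
by rewrite exprD (phi_kpotent inc_e (idem_exprS _ idem_e)) -exprSr prednK.
Qed.

(** * The Jordan homomorphism [psi] *)

Lemma two_neq0 : (2%:R : F) != 0.
Proof.
apply: contraTneq isT => two0; have char2 : (2 \in [pchar F])%N by rewrite inE two0 eqxx.
have := dvdn_pcharf char2 m.+1; have := dvdn_pcharf char2 m.
rewrite (negbTE m1_neq0) (negbTE (prim_root_natf_neq0 prim_w)) !dvdn2 /=.
by case: (odd m).
Qed.

Lemma twice_inj (b c : B) : b *+ 2 = c *+ 2 -> b = c.
Proof.
move/eqP; rewrite -subr_eq0 -mulrnBl -scaler_nat scaler_eq0 (negbTE two_neq0) /=.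
by rewrite subr_eq0 => /eqP.
Qed.

Definition jprod f g := psi f * psi g + psi g * psi f.

Lemma jprodC f g : jprod f g = jprod g f.
Proof. by rewrite /jprod addrC. Qed.

Lemma jprodDl f g h : jprod (f + g) h = jprod f h + jprod g h.
Proof. by rewrite /jprod linearD mulrDl mulrDr addrACA. Qed.

Lemma jprodDr f g h : jprod h (f + g) = jprod h f + jprod h g.
Proof. by rewrite jprodC jprodDl !(jprodC h). Qed.

Lemma jprod_idem_nil e f : inc e -> inc f -> e * e = e ->
  e * f + f * e = f -> f * f = 0 -> jprod e f = psi f /\ psi f * psi f = 0.
Proof.
move=> inc_e inc_f idem_e jordan_ef nil_f.
have idem_add : psi (e + f) * psi (e + f) = psi (e + f).
  apply: psi_idem; first exact: incD.
  by rewrite mulrDl !mulrDr idem_e nil_f addr0 -addrA jordan_ef.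
have idem_sub : psi (e - f) * psi (e - f) = psi (e - f).
  apply: psi_idem; first exact: incB.
  by rewrite mulrBl !mulrBr idem_e nil_f subr0 -addrA -opprD jordan_ef.
rewrite !linearD linearN in idem_add idem_sub.
have [twice_j twice_sq] := idem_add_sub (psi_idem inc_e idem_e) idem_add idem_sub.
by split; apply: twice_inj; rewrite ?mul0rn.
Qed.

Lemma jprod_orth_idem e f : inc e -> inc f -> e * e = e -> f * f = f ->
  e * f = 0 -> f * e = 0 -> jprod e f = 0.
Proof.
move=> inc_e inc_f idem_e idem_f ef0 fe0.
apply: idem_add_anticomm; rewrite ?psi_idem // -linearD psi_idem //; first exact: incD.
by rewrite mulrDl !mulrDr idem_e idem_f ef0 fe0 addr0 add0r.
Qed.

Lemma psi_sqrD f g : psi (f + g) * psi (f + g) = psi f * psi f + jprod f g + psi g * psi g.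
Proof. by rewrite psiD mulrDl !mulrDr /jprod !addrA. Qed.

Section MatrixUnits.
Variables x y : X.
Hypothesis lt_xy : (x < y)%O.
Let inc_xx := inc_delta F (lexx x).
Let inc_yy := inc_delta F (lexx y).
Let inc_xy := inc_delta F (ltW lt_xy).
Let neq_yx := gt_eqF lt_xy.

Lemma psi_delta_nil : psi (delta x y) * psi (delta x y) = 0.
Proof.
apply: (proj2 (jprod_idem_nil inc_xx inc_xy (delta_idem F x) _ _)).
  by rewrite !delta_mul eqxx neq_yx addr0.
by rewrite delta_mul neq_yx.
Qed.

Lemma jprod_delta_src : jprod (delta x x) (delta x y) = psi (delta x y).
Proof.
apply: (proj1 (jprod_idem_nil inc_xx inc_xy (delta_idem F x) _ _)).
  by rewrite !delta_mul eqxx neq_yx addr0.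
by rewrite delta_mul neq_yx.
Qed.

Lemma jprod_delta_tgt : jprod (delta y y) (delta x y) = psi (delta x y).
Proof.
apply: (proj1 (jprod_idem_nil inc_yy inc_xy (delta_idem F y) _ _)).
  by rewrite !delta_mul eqxx neq_yx add0r.
by rewrite delta_mul neq_yx.
Qed.

Lemma jprod_delta_diag z :
  jprod (delta z z) (delta x y) = psi (delta z z * delta x y + delta x y * delta z z).
Proof.
have [-> | /negbTE neq_zx] := eqVneq z x.
  by rewrite !delta_mul eqxx neq_yx addr0 jprod_delta_src.
have [-> | /negbTE neq_zy] := eqVneq z y.
  by rewrite !delta_mul eqxx neq_yx add0r jprod_delta_tgt.
have neq_xz : (x == z) = false by rewrite eq_sym neq_zx.
have neq_yz : (y == z) = false by rewrite eq_sym neq_zy.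
rewrite !delta_mul neq_zx neq_yz addr0 linear0.
(* Compare with the idempotent [delta x x + delta z z]. *)
have [] := @jprod_idem_nil (delta x x + delta z z) (delta x y).
- by apply: incD => //; apply: inc_delta.
- by [].
- by rewrite mulrDl !mulrDr !delta_mul !eqxx neq_xz neq_zx addr0 add0r.
- by rewrite mulrDl !mulrDr !delta_mul eqxx neq_zx neq_yx neq_yz !addr0.
- by rewrite delta_mul neq_yx.
by rewrite jprodDl jprod_delta_src -[X in _ = X]addr0 => /addrI.
Qed.

End MatrixUnits.

Lemma jprod_delta_disjoint x y z v : (x < y)%O -> (z < v)%O -> y != z -> v != x ->
  jprod (delta x y) (delta z v) = 0.
Proof.
move=> lt_xy lt_zv /negbTE neq_yz /negbTE neq_vx.
have neq_yx := gt_eqF lt_xy; have neq_vz := gt_eqF lt_zv.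
have := psi_sqrD (delta x y) (delta z v).
rewrite psi_delta_nil // psi_delta_nil // add0r addr0 => <-.
have inc_sum : inc (delta x y + delta z v) by apply: incD; apply/inc_delta/ltW.
have nil_sum : (delta x y + delta z v) * (delta x y + delta z v) = 0.
  by rewrite mulrDl !mulrDr !delta_mul neq_yx neq_yz neq_vx neq_vz !addr0.
(* [delta x y + delta z v] is square-zero and fits [jprod_idem_nil] with the
   idempotent [delta x x], plus [delta z z] when [z != x]. *)
have [eq_xz | /negbTE neq_xz] := eqVneq x z.
  rewrite -{}eq_xz in neq_yz neq_vz lt_zv inc_sum nil_sum *.
  apply: (proj2 (jprod_idem_nil (inc_delta F (lexx x)) inc_sum (delta_idem F x) _ nil_sum)).
  by rewrite mulrDr mulrDl !delta_mul eqxx neq_yx neq_vx !addr0.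
have neq_zx : (z == x) = false by rewrite eq_sym neq_xz.
have inc_e : inc (delta x x + delta z z) by apply: incD; apply: inc_delta.
apply: (proj2 (jprod_idem_nil inc_e inc_sum _ _ nil_sum)).
  by rewrite mulrDl !mulrDr !delta_mul !eqxx neq_xz neq_zx addr0 add0r.
rewrite !mulrDl !mulrDr !delta_mul !eqxx neq_xz neq_zx neq_yx neq_yz neq_vx neq_vz.
by rewrite !addr0 add0r.
Qed.

Lemma jprod_delta_chain x y v : (x < y)%O -> (y < v)%O ->
  jprod (delta x y) (delta y v) = psi (delta x v).
Proof.
move=> lt_xy lt_yv; have lt_xv := lt_trans lt_xy lt_yv.
have neq_yx := gt_eqF lt_xy; have neq_vy := gt_eqF lt_yv; have neq_vx := gt_eqF lt_xv.
have [] := @jprod_idem_nil (delta y y + delta x y) (delta y v + delta x v).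
- by apply: incD; apply/inc_delta; rewrite ?lexx ?ltW.
- by apply: incD; apply/inc_delta/ltW.
- by rewrite mulrDl !mulrDr !delta_mul eqxx neq_yx !addr0.
- by rewrite !mulrDl !mulrDr !delta_mul eqxx neq_yx neq_vy neq_vx !addr0.
- by rewrite mulrDl !mulrDr !delta_mul neq_vy neq_vx !addr0.
rewrite jprodDl !jprodDr jprod_delta_src // jprod_delta_diag // !delta_mul neq_yx neq_vy.
rewrite addr0 linear0 addr0 (jprod_delta_disjoint lt_xy lt_xv (negbT neq_yx) (negbT neq_vx)).
by rewrite addr0 psiD => /addrI.
Qed.

Lemma jprod_delta p q : (p.1 <= p.2)%O -> (q.1 <= q.2)%O ->
  jprod (delta p.1 p.2) (delta q.1 q.2) =
  psi (delta p.1 p.2 * delta q.1 q.2 + delta q.1 q.2 * delta p.1 p.2).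
Proof.
case: p q => [x y] [z v] /=; rewrite !le_eqVlt.
case: eqP => [<- _ | _ /= lt_xy]; case: eqP => [<- _ | _ /= lt_zv].
- have [<- | /negbTE neq_xz] := eqVneq x z.
    by rewrite /jprod delta_idem psiD (psi_idem (inc_delta F (lexx x)) (delta_idem F x)).
  have neq_zx : (z == x) = false by rewrite eq_sym.
  rewrite !delta_mul neq_xz neq_zx addr0 linear0.
  by apply: jprod_orth_idem; rewrite ?delta_idem ?delta_mul ?neq_xz ?neq_zx //; apply: inc_delta.
- exact: jprod_delta_diag.
- by rewrite jprodC addrC; apply: jprod_delta_diag.
have [eq_yz | neq_yz] := eqVneq y z.
  rewrite -{}eq_yz in lt_zv *.
  by rewrite jprod_delta_chain // !delta_mul eqxx (gt_eqF (lt_trans lt_xy lt_zv)) addr0.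
have [eq_vx | neq_vx] := eqVneq v x.
  rewrite -{}eq_vx in lt_xy *.
  by rewrite jprodC jprod_delta_chain // !delta_mul eqxx (gt_eqF (lt_trans lt_zv lt_xy)) add0r.
by rewrite jprod_delta_disjoint // !delta_mul (negbTE neq_yz) (negbTE neq_vx) addr0 linear0.
Qed.

Lemma psi_jordan f g : inc f -> inc g -> psi (f * g + g * f) = jprod f g.
Proof.
(* Both sides are bilinear in the coordinates of [f] and [g] and agree on matrix
   units by [jprod_delta]. *)
move=> inc_f inc_g; rewrite (inc_delta_sum inc_f) (inc_delta_sum inc_g).
set P := fun p : X * X => (p.1 <= p.2)%O; set D := fun p : X * X => delta p.1 p.2.
have mulD (a b : X * X -> F) : (\sum_(p | P p) a p *: D p) * (\sum_(q | P q) b q *: D q) =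
    \sum_(p | P p) \sum_(q | P q) (a p * b q) *: (D p * D q).
  rewrite mulr_suml; apply: eq_bigr => p _; rewrite mulr_sumr; apply: eq_bigr => q _.
  by rewrite -xscaleAl -xscaleAr scalerA.
have mulB (a b : X * X -> F) (t : X * X -> B) :
    (\sum_(p | P p) a p *: t p) * (\sum_(q | P q) b q *: t q) =
    \sum_(p | P p) \sum_(q | P q) (a p * b q) *: (t p * t q).
  rewrite mulr_suml; apply: eq_bigr => p _; rewrite mulr_sumr; apply: eq_bigr => q _.
  by rewrite -scalerAl -scalerAr scalerA.
have psi_sum (a : X * X -> F) : psi (\sum_(p | P p) a p *: D p) = \sum_(p | P p) a p *: psi (D p).
  by rewrite linear_sum; apply: eq_bigr => p _; rewrite linearZ.
rewrite /jprod !psi_sum !mulD !mulB [X in _ + X]exchange_big [X in _ = _ + X]exchange_big /=.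
rewrite linearD !linear_sum -!big_split; apply: eq_bigr => p P_p.
rewrite /= !linear_sum -!big_split; apply: eq_bigr => q P_q.
rewrite /= !linearZ [g q * _]mulrC -!scalerDr -linearD.
by rewrite -[psi (D p) * _ + _]/(jprod (D p) (D q)) jprod_delta.
Qed.

Lemma psi_sqr f : inc f -> psi (f * f) = psi f * psi f.
Proof.
move=> inc_f; apply: twice_inj.
by rewrite -psiMn mulr2n psi_jordan // /jprod -mulr2n.
Qed.

Lemma psi_triple f g : inc f -> inc g -> psi (f * g * f) = psi f * psi g * psi f.
Proof.
move=> inc_f inc_g; have inc_fg : inc (f * g + g * f) by apply: incD; apply: incM.
apply: twice_inj; rewrite -psiMn -!jordan_triple_identity psiB.
rewrite (psi_jordan inc_f inc_fg) (psi_jordan (incM inc_f inc_f) inc_g) /jprod.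
by rewrite (psi_jordan inc_f inc_g) psi_sqr.
Qed.

Lemma psi_jordan_hom : inc_jordan_hom psi.
Proof.
split=> [c f g _ _ | f inc_f | f g inc_f inc_g]; first by rewrite inc_combE linearP.
  by rewrite inc_mulE // psi_sqr.
by rewrite !inc_mulE ?psi_triple //; apply: incM.
Qed.

End KpotentPreserver.

Theorem corollary7p4 (k : nat) (F : fieldType) (d : Order.disp_t)
    (X : finPOrderType d) (B : algType F) (phi : incfun X F -> B) :
  (3 <= k)%N ->
  (exists z : F, (k.-1).-primitive_root z) ->
  (forall p : nat, p \in [pchar F] -> ~~ (p %| k)%N) ->
  inc_linear phi ->
  (forall f : incfun X F, is_incidence f -> inc_exp f k = f ->
     phi f ^+ k = phi f) ->
  (exists2 f : incfun X F, is_incidence f & phi f = 1) ->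
  exists (psi : incfun X F -> B) (u : B),
    [/\ inc_jordan_hom psi,
        (forall f : incfun X F, is_incidence f -> u * phi f = phi f * u),
        u ^+ k.-1 = 1 &
        (forall f : incfun X F, is_incidence f -> phi f = u * psi f)].
Proof.
case: k => [|m] // m_gt1 [w prim_w] k_coprime_char phi_lin phi_kpot phi_hits1.
have m1_neq0 : (m.+1)%:R != 0 :> F.
  apply/negP => /eqP k0; have [p char_p] := natf0_pchar (ltn0Sn m) (introT eqP k0).
  by move: (k_coprime_char p char_p); rewrite (dvdn_pcharf char_p) k0 eqxx.
exists (psi phi m), (phi (1 : xmatrix X F)); split.
- exact: (psi_jordan_hom phi_lin m_gt1 prim_w m1_neq0 phi_kpot).
- exact: (phi_comm_u phi_lin m_gt1 prim_w m1_neq0 phi_kpot).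
- exact: (expu_m phi_lin m_gt1 prim_w m1_neq0 phi_kpot phi_hits1).
- exact: (phi_u_psi phi_lin m_gt1 prim_w m1_neq0 phi_kpot).
Qed.
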